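(* Assume the Setting and consider Algorithm 1 with noisy data $y^\delta$ ($\|y^\delta-y\|\le\delta$, $\delta>0$), where $\tau>1$ and $\mu_0>0$ satisfy $c_0:=1-\frac{1+\eta}{\tau}-\eta-\frac{\mu_0}{4\sigma}>0$. Let $k\ge0$ be an integer such that $\|r_n^\delta\|>\tau\delta$ for all $0\le n<k$. Then $x_n^\delta\in B_{2\rho}(x_0)$ for all $0\le n\le k$, and for every solution $\hat x$ of $F(x)=y$ with $\hat x\in B_{2\rho}(x_0)\cap\mathrm{dom}(\mathcal R)$, setting $\Delta_n^\delta:=D_{\mathcal R}^{\xi_n^\delta}(\hat x,x_n^\delta)$, one has $\Delta_{n+1}^\delta\le\Delta_n^\delta-c_0\alpha_n^\delta\|r_n^\delta\|^2$ for all $0\le n<k$.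
   Context: Setting. Let $X,Y$ be real Hilbert spaces. Let $\mathcal R:X\to(-\infty,\infty]$ be proper, lower semicontinuous and strongly convex with constant $\sigma>0$, i.e. $\mathcal R(t\bar x+(1-t)x)+\sigma t(1-t)\|\bar x-x\|^2\le t\mathcal R(\bar x)+(1-t)\mathcal R(x)$ for all $\bar x,x\in\mathrm{dom}(\mathcal R)$ and $t\in[0,1]$. For $\xi\in\partial\mathcal R(x)$ (subdifferential) the Bregman distance is $D_{\mathcal R}^{\xi}(z,x)=\mathcal R(z)-\mathcal R(x)-\langle\xi,z-x\rangle$. The convex conjugate $\mathcal R^*$ is differentiable with $\|\nabla\mathcal R^*(\bar\xi)-\nabla\mathcal R^*(\xi)\|\le\|\bar\xi-\xi\|/(2\sigma)$, and $\nabla\mathcal R^*(\xi)=\arg\min_{x\in X}\{\mathcal R(x)-\langle\xi,x\rangle\}$ (unique minimizer), with $\xi\in\partial\mathcal R(\nabla\mathcal R^*(\xi))$. Let $F:\mathrm{dom}(F)\subset X\to Y$ and $y\in Y$. Assume: (b) there are $\rho>0$, $x_0\in X$, $\xi_0\in\partial\mathcal R(x_0)$ with $B_{2\rho}(x_0):=\{x:\|x-x_0\|\le 2\rho\}\subset\mathrm{dom}(F)$, and $F(x)=y$ has a solution $\bar x$ with $D_{\mathcal R}^{\xi_0}(\bar x,x_0)\le\sigma\rho^2$; (c) $F$ is weakly closed: if $x_n\in\mathrm{dom}(F)$, $x_n\rightharpoonup x$ and $F(x_n)\to v$, then $x\in\mathrm{dom}(F)$ and $F(x)=v$; (d) there are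 bounded linear operators $L(x):X\to Y$, $x\in B_{2\rho}(x_0)$, with $x\mapsto L(x)$ continuous on $B_{2\rho}(x_0)$, a constant $\eta\in[0,1)$ with $\|F(x)-F(\bar x)-L(\bar x)(x-\bar x)\|\le\eta\|F(x)-F(\bar x)\|$ for all $x,\bar x\in B_{2\rho}(x_0)$, and a constant $L>0$ with $\|L(x)\|\le L$ on $B_{2\rho}(x_0)$. Under these assumptions $F(x)=y$ has a unique solution $x^\dagger\in\mathrm{dom}(F)$ minimizing $D_{\mathcal R}^{\xi_0}(x,x_0)$ over all solutions; it satisfies $\|x^\dagger-x_0\|\le\rho$. Algorithm 1 (noisy data $y^\delta$ with $\|y^\delta-y\|\le\delta$, $\delta>0$). Parameters: $\tau>1$, $\beta\in(0,\infty]$, $\mu_0>0$, $\mu_1>0$, and a fixed choice of one of two step-size rules: (constant) $\alpha_n^\delta=\mu_0/L^2$, or (adaptive) $\alpha_n^\delta=\min\{\mu_0\|r_n^\delta\|^2/\|g_n^\delta\|^2,\mu_1\}$ (with $\mu_0\|r_n^\delta\|^2/\|g_n^\delta\|^2:=+\infty$ if $g_n^\delta=0$). Set $\xi_{-1}^\delta=\xi_0^\delta=\xi_0$, $x_0^\delta=x_0=\nabla\mathcal R^*(\xi_0)$. For $n\ge0$: (i) $r_n^\delta:=F(x_n^\delta)-y^\delta$; if $\|r_n^\delta\|\le\tau\delta$, stop and output $x_n^\delta$ (the stopping index is denoted $n_\delta$). (ii) $g_n^\delta:=L(x_n^\delta)^*r_n^\delta$ and $\alpha_n^\delta$ by the chosen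 rule. (iii) $m_n^\delta:=\xi_n^\delta-\xi_{n-1}^\delta$; $\tilde\gamma_0^\delta:=0$ and for $n\ge1$, $\tilde\gamma_n^\delta:=\langle m_n^\delta,x_n^\delta-x_{n-1}^\delta\rangle-(1-\eta)\alpha_{n-1}^\delta\|r_{n-1}^\delta\|^2+(1+\eta)\alpha_{n-1}^\delta\delta\|r_{n-1}^\delta\|+\beta_{n-1}^\delta\tilde\gamma_{n-1}^\delta$. (iv) $\beta_n^\delta:=\min\{\max\{0,(\alpha_n^\delta\langle g_n^\delta,m_n^\delta\rangle-2\sigma\tilde\gamma_n^\delta)/\|m_n^\delta\|^2\},\beta\}$ if $m_n^\delta\ne0$, and $\beta_n^\delta:=0$ if $m_n^\delta=0$. (v) $\xi_{n+1}^\delta:=\xi_n^\delta-\alpha_n^\delta g_n^\delta+\beta_n^\delta m_n^\delta$, $x_{n+1}^\delta:=\nabla\mathcal R^*(\xi_{n+1}^\delta)$. *)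

From HB Require Import structures.
From mathcomp Require Import all_boot all_order all_algebra.
From mathcomp Require Import all_classical all_reals all_analysis.
Set Implicit Arguments. Unset Strict Implicit. Unset Printing Implicit Defensive.
Import Order.TTheory GRing.Theory Num.Theory.
Import numFieldNormedType.Exports.
Local Open Scope classical_set_scope.
Local Open Scope ring_scope.

(* ip is an inner product on the normed space X inducing its norm.
   Together with X : completeNormedModType R this makes X a real Hilbert space. *)
Definition inner_product {R : realType} {X : normedModType R} (ip : X -> X -> R) :=
  [/\ (forall x y, ip x y = ip y x),
      (forall (a : R) x y z, ip (a *: x + y) z = a * ip x z + ip y z) &
      (forall x, ip x x = `|x| ^+ 2)].

Definition cball {R : realType} {X : normedModType R} (c : X) (r : R) : set X :=
  [set x | `|x - c| <= r].

Section ConvexAnalysis.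
Context {R : realType} {X : normedModType R} (ip : X -> X -> R) (Rf : X -> \bar R).
Local Open Scope ereal_scope.

Definition domR : set X := [set x | Rf x < +oo].

Definition proper_fun : Prop := (exists x, Rf x < +oo) /\ (forall x, -oo < Rf x).

Definition strongly_convex (sigma : R) : Prop :=
  forall (xb x : X) (t : R), domR xb -> domR x -> (0 <= t <= 1)%R ->
    Rf (t *: xb + (1 - t) *: x)%R + (sigma * t * (1 - t) * `|(xb - x)%R| ^+ 2)%:E
    <= t%:E * Rf xb + (1 - t)%:E * Rf x.

Definition subdiff (x xi : X) : Prop :=
  Rf x \is a fin_num /\ forall z, Rf x + (ip xi (z - x)%R)%:E <= Rf z.

Definition bregman (xi z x : X) : \bar R := Rf z - Rf x - (ip xi (z - x)%R)%:E.

(* g xi is a minimizer of x |-> Rf x - <xi, x> for every xi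
   (this characterizes grad R^* xi = argmin, the minimizer being unique) *)
Definition is_grad_conj (g : X -> X) : Prop :=
  forall xi z, Rf (g xi) - (ip xi (g xi))%:E <= Rf z - (ip xi z)%:E.

End ConvexAnalysis.

Inductive step_rule := ConstantStep | AdaptiveStep.

Record alg_state {X : Type} {R : Type} := AlgState
  { st_x : X ; st_xi : X ; st_xip : X ; st_gam : R }.

Section Algorithm1.
Context {R : realType} {X Y : normedModType R}.
Variables (ipX : X -> X -> R) (gradRs : X -> X) (F : X -> Y) (Lstar : X -> Y -> X)
  (Lc eta sigma : R) (beta : \bar R) (mu0 mu1 : R) (rule : step_rule)
  (delta : R) (ydelta : Y) (x0 xi0 : X).

Definition alg_alpha (r : Y) (g : X) : R :=
  match rule with
  | ConstantStep => mu0 / Lc ^+ 2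
  | AdaptiveStep => if g == 0 then mu1
                    else Num.min (mu0 * `|r| ^+ 2 / `|g| ^+ 2) mu1
  end.

Definition alg_beta (a : R) (g m : X) (gam : R) : R :=
  if m == 0 then 0 else
  let q := Num.max 0 ((a * ipX g m - 2 * sigma * gam) / `|m| ^+ 2) in
  match beta with
  | EFin b => Num.min q b
  | _ => q   (* beta = +oo *)
  end.

(* one iteration: state n = (x_n, xi_n, xi_{n-1}, gamma~_n) *)
Definition alg_step (s : @alg_state X R) : @alg_state X R :=
  let x := st_x s in
  let xi := st_xi s in
  let r := F x - ydelta in
  let g := Lstar x r in
  let a := alg_alpha r g in
  let m := xi - st_xip s in
  let b := alg_beta a g m (st_gam s) in
  let xi' := xi - a *: g + b *: m in
  let x' := gradRs xi' in
  let gam' := ipX (xi' - xi) (x' - x) - (1 - eta) * a * `|r| ^+ 2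
              + (1 + eta) * a * delta * `|r| + b * st_gam s in
  AlgState x' xi' xi gam'.

(* the (non-stopped) iteration of Algorithm 1 *)
Fixpoint alg_iter (n : nat) : @alg_state X R :=
  match n with
  | 0 => AlgState x0 xi0 xi0 0
  | n'.+1 => alg_step (alg_iter n')
  end.

Definition alg_x n := st_x (alg_iter n).
Definition alg_xi n := st_xi (alg_iter n).
Definition alg_r n := F (alg_x n) - ydelta.
Definition alg_alpha_n n := alg_alpha (alg_r n) (Lstar (alg_x n) (alg_r n)).

End Algorithm1.

From HB Require Import structures.
From mathcomp Require Import all_boot all_order all_algebra.
From mathcomp Require Import all_classical all_reals all_analysis.
From mathcomp Require Import ring lra.
Import Order.TTheory GRing.Theory Num.Theory.
Import numFieldNormedType.Exports.
Local Open Scope classical_set_scope.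
Local Open Scope ring_scope.

(* Along the iteration, the Bregman distance to any solution xh in B_{2 rho}(x0)
   decreases by c0 alpha_n ||r_n||^2.  Writing
     Delta_{n+1} - Delta_n = D^{xi_{n+1}}(x_n, x_{n+1}) + <xi_{n+1} - xi_n, x_n - xh>,
   strong convexity bounds the first term by ||xi_{n+1} - xi_n||^2 / (4 sigma);
   expanding xi_{n+1} - xi_n = beta_n m_n - alpha_n g_n, the momentum contributions
   are absorbed thanks to the invariant <m_n, x_n - xh> <= gamma~_n, which is
   exactly what the recursion for gamma~_n and the choice of beta_n maintain, while
   the tangential cone condition gives <g_n, x_n - xh> >= (1 - eta) ||r_n||^2
   - (1 + eta) delta ||r_n|| and the discrepancy principle ||r_n|| > tau delta
   turns this into the constant c0.  The operator assumptions only hold on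
   B_{2 rho}(x0), so both claims are proved by a joint induction: the decrease for
   the solution xb of assumption (b) keeps sigma ||x_n - xb||^2 <= sigma rho^2,
   and ||xb - x0|| <= rho likewise, so x_n stays in B_{2 rho}(x0).
   Lower semicontinuity, weak closedness, continuity of L and B_{2 rho}(x0) being
   inside dom(F) are only needed for the existence of the minimal-distance
   solution, not here. *)

Section InnerProduct.
Context {R : realType} {X : normedModType R} {ip : X -> X -> R}
  (hip : inner_product ip).

Lemma ipC x y : ip x y = ip y x. Proof. by case: hip. Qed.

Lemma ipxx x : ip x x = `|x| ^+ 2. Proof. by case: hip. Qed.

Lemma ipDl x y z : ip (x + y) z = ip x z + ip y z.
Proof. by case: hip => _ hlin _; rewrite -{1}[x]scale1r hlin mul1r. Qed.

Lemma ip0l z : ip 0 z = 0.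
Proof. by have := ipDl 0 0 z; rewrite addr0; lra. Qed.

Lemma ipZl a x z : ip (a *: x) z = a * ip x z.
Proof. by case: hip => _ hlin _; rewrite -[a *: x]addr0 hlin ip0l addr0. Qed.

Lemma ipNl x z : ip (- x) z = - ip x z.
Proof. by rewrite -scaleN1r ipZl mulN1r. Qed.

Lemma ipBl x y z : ip (x - y) z = ip x z - ip y z.
Proof. by rewrite ipDl ipNl. Qed.

Lemma ipDr x y z : ip z (x + y) = ip z x + ip z y.
Proof. by rewrite ipC ipDl !(ipC _ z). Qed.

Lemma ipZr a x z : ip z (a *: x) = a * ip z x.
Proof. by rewrite ipC ipZl ipC. Qed.

Lemma ipNr x z : ip z (- x) = - ip z x.
Proof. by rewrite ipC ipNl ipC. Qed.

Lemma ipBr x y z : ip z (x - y) = ip z x - ip z y.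
Proof. by rewrite ipDr ipNr. Qed.

Lemma ip0r z : ip z 0 = 0.
Proof. by rewrite ipC ip0l. Qed.

Lemma normB2 x y : `|x - y| ^+ 2 = `|x| ^+ 2 - 2 * ip x y + `|y| ^+ 2.
Proof. by rewrite -!ipxx ipBl !ipBr (ipC y x); ring. Qed.

Lemma ip_young (c : R) x y : 4 * c * ip x y <= `|x| ^+ 2 + 4 * c ^+ 2 * `|y| ^+ 2.
Proof.
have : 0 <= ip (x - (2 * c) *: y) (x - (2 * c) *: y) by rewrite ipxx sqr_ge0.
by rewrite ipBl !ipBr !ipZl !ipZr !ipxx (ipC y x); lra.
Qed.

Lemma ip_le_norm x y : ip x y <= `|x| * `|y|.
Proof.
have [->|xn0] := eqVneq x 0; first by rewrite ip0l normr0 mul0r.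
have [->|yn0] := eqVneq y 0; first by rewrite ip0r normr0 mulr0.
have nxy : 0 < `|x| * `|y| by rewrite mulr_gt0 ?normr_gt0.
have := ip_young 1 ((2 * `|y|) *: x) (`|x| *: y).
rewrite ipZl ipZr !normrZ !ger0_norm ?mulr_ge0 ?normr_ge0 //; nra.
Qed.

Lemma ip_ge_Nnorm x y : - (`|x| * `|y|) <= ip x y.
Proof. by have := ip_le_norm (- x) y; rewrite ipNl normrN; lra. Qed.

End InnerProduct.

Lemma ler_of_scaled_le {R : realFieldType} (A D : R) : 0 <= A ->
  (forall t, 0 < t <= 1 -> (1 - t) * A <= D) -> A <= D.
Proof.
move=> A0 hD; apply/ler_addgt0Pr => e e0.
have eA : 0 < e + A by rewrite ltr_wpDr.
have t01 : 0 < e / (e + A) <= 1.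
  by rewrite divr_gt0 //= ler_pdivrMr // mul1r lerDl.
have tA : e / (e + A) * A <= e.
  by rewrite mulrAC ler_pdivrMr //; nra.
by have := hD _ t01; lra.
Qed.

Definition bregmanR {R : realType} {X : normedModType R} (ip : X -> X -> R)
  (Rf : X -> \bar R) (xi z x : X) : R :=
  fine (Rf z) - fine (Rf x) - ip xi (z - x).

Section ConvexAnalysis.
Context {R : realType} {X : normedModType R} {ip : X -> X -> R}
  (hip : inner_product ip) (Rf : X -> \bar R) (hprop : proper_fun Rf).

Local Notation bregmanR := (bregmanR ip Rf).

Lemma domR_fin_num {x} : domR Rf x -> Rf x \is a fin_num.
Proof. by move=> hx; rewrite fin_numElt hx (proj2 hprop). Qed.

Lemma domR_fineK {x} : domR Rf x -> (fine (Rf x))%:E = Rf x.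
Proof. by move/domR_fin_num/fineK. Qed.

Lemma subdiff_domR {x xi} : subdiff ip Rf x xi -> domR Rf x.
Proof. by case; rewrite fin_numElt => /andP[]. Qed.

Lemma bregmanE xi z x : domR Rf z -> domR Rf x ->
  bregman ip Rf xi z x = (bregmanR xi z x)%:E.
Proof. by move=> hz hx; rewrite /bregman -(domR_fineK hz) -(domR_fineK hx). Qed.

Lemma bregman_le_domR {xi z x} {c : R} : domR Rf x ->
  (bregman ip Rf xi z x <= c%:E)%E -> domR Rf z.
Proof.
rewrite /bregman /domR /= => /domR_fineK <-.
by case: (Rf z) (proj2 hprop z).
Qed.

Lemma bregmanR_three_point xi xi' z x x' :
  bregmanR xi' z x' - bregmanR xi z x = bregmanR xi' x x' + ip (xi' - xi) (x - z).
Proof. by rewrite /bregmanR !(ipBr hip) !(ipBl hip); ring. Qed.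

Lemma subdiff_grad_conj {g : X -> X} xi :
  is_grad_conj ip Rf g -> subdiff ip Rf (g xi) xi.
Proof.
move=> hg; case: hprop => [[x1 hx1] hninf].
have hdom : domR Rf (g xi).
  have := hg xi x1; rewrite /domR /= -(domR_fineK hx1) -EFinB.
  by case: (Rf (g xi)) (hninf (g xi)).
split; first exact: domR_fin_num.
move=> z; have := hg xi z.
case: (Rf z) (hninf z) => [r| |] // _ => [|_]; last exact: leey.
by rewrite -(domR_fineK hdom) -!EFinB -EFinD !lee_fin (ipBr hip); lra.
Qed.

Section StronglyConvex.
Variable sigma : R.
Hypotheses (hsigma : 0 <= sigma) (hsc : strongly_convex Rf sigma).

Lemma bregmanR_ge_scaled x xi z t : subdiff ip Rf x xi -> domR Rf z -> 0 < t <= 1 ->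
  (1 - t) * (sigma * `|z - x| ^+ 2) <= bregmanR xi z x.
Proof.
move=> hsd hz /andP[t0 t1]; have hx := subdiff_domR hsd.
have := hsc z x t hz hx; rewrite t1 ltW //= => /(_ isT).
set w := t *: z + (1 - t) *: x.
have wx : w - x = t *: (z - x).
  by rewrite /w scalerBl scale1r scalerBr addrCA addrAC subrr add0r.
case: hsd => _ /(_ w); rewrite wx (ipZr hip) -(domR_fineK hx) -(domR_fineK hz).
move=> /(leeD2r (sigma * t * (1 - t) * `|z - x| ^+ 2)%:E) /le_trans h /h{h}.
rewrite -!EFinM -!EFinD lee_fin => h; rewrite -(ler_pM2l t0) /bregmanR; lra.
Qed.

Lemma bregmanR_ge {x xi z} : subdiff ip Rf x xi -> domR Rf z ->
  sigma * `|z - x| ^+ 2 <= bregmanR xi z x.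
Proof.
move=> hsd hz; apply: ler_of_scaled_le; first by rewrite mulr_ge0 ?sqr_ge0.
by move=> t; apply: bregmanR_ge_scaled.
Qed.

Lemma bregmanR_le_dual {x x' xi xi'} : subdiff ip Rf x xi -> subdiff ip Rf x' xi' ->
  4 * sigma * bregmanR xi' x x' <= `|xi' - xi| ^+ 2.
Proof.
move=> hsd hsd'.
have -> : bregmanR xi' x x' = ip (xi' - xi) (x' - x) - bregmanR xi x' x.
  by rewrite /bregmanR !(ipBr hip) !(ipBl hip); ring.
have := ler_wpM2l hsigma (bregmanR_ge hsd (subdiff_domR hsd')).
have := ip_young hip sigma (xi' - xi) (x' - x).
lra.
Qed.

Lemma bregmanR_dist_le {x xi z rho} : 0 < sigma -> 0 <= rho ->
  subdiff ip Rf x xi -> domR Rf z -> bregmanR xi z x <= sigma * rho ^+ 2 ->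
  `|z - x| <= rho.
Proof.
move=> sigma0 rho0 hsd hz /(le_trans (bregmanR_ge hsd hz)).
by rewrite ler_pM2l // ler_sqr ?nnegrE.
Qed.

End StronglyConvex.
End ConvexAnalysis.

Section StepSizes.
Context {R : realType} {X Y : normedModType R}.

Lemma alg_alpha_ge0 Lc mu0 mu1 rule (r : Y) (g : X) : 0 <= mu0 -> 0 <= mu1 ->
  0 <= alg_alpha Lc mu0 mu1 rule r g.
Proof.
move=> mu0_ge0 mu1_ge0; rewrite /alg_alpha.
case: rule; first by rewrite divr_ge0 ?sqr_ge0.
by case: eqP => // _; rewrite le_min mu1_ge0 divr_ge0 ?mulr_ge0 ?sqr_ge0.
Qed.

Lemma alg_alpha_mul_sqr_le Lc mu0 mu1 rule (r : Y) (g : X) :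
  0 < Lc -> 0 <= mu0 -> `|g| <= Lc * `|r| ->
  alg_alpha Lc mu0 mu1 rule r g * `|g| ^+ 2 <= mu0 * `|r| ^+ 2.
Proof.
move=> Lc_gt0 mu0_ge0 hg; rewrite /alg_alpha; case: rule.
  have g2 : `|g| ^+ 2 <= Lc ^+ 2 * `|r| ^+ 2.
    by rewrite -exprMn ler_sqr ?nnegrE // mulr_ge0 // ltW.
  by rewrite mulrAC ler_pdivrMr ?exprn_gt0 // -mulrA ler_wpM2l // mulrC.
case: eqP => [->|/eqP gn0]; first by rewrite normr0 expr0n /= mulr0 mulr_ge0 ?sqr_ge0.
by rewrite -ler_pdivlMr ?exprn_gt0 ?normr_gt0 // ge_min lexx.
Qed.

Context (ip : X -> X -> R) (sigma : R) (beta : \bar R) (a : R) (g m : X) (gam : R).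
Hypothesis hbeta : (0 < beta)%E.

Lemma alg_beta_bounds : m != 0 ->
  0 <= alg_beta ip sigma beta a g m gam <=
  Num.max 0 ((a * ip g m - 2 * sigma * gam) / `|m| ^+ 2).
Proof.
move=> mn0; rewrite /alg_beta (negPf mn0).
have q0 : 0 <= Num.max 0 ((a * ip g m - 2 * sigma * gam) / `|m| ^+ 2).
  by rewrite le_max lexx.
case: beta hbeta => [bb| |] //= hb; last by rewrite q0 lexx.
by rewrite ge_min lexx le_min q0 ltW // -lte_fin.
Qed.

Lemma alg_beta_ge0 : 0 <= alg_beta ip sigma beta a g m gam.
Proof.
have [->|mn0] := eqVneq m 0; first by rewrite /alg_beta eqxx.
by case/andP: (alg_beta_bounds mn0).
Qed.

Lemma alg_beta_sqr_le :
  alg_beta ip sigma beta a g m gam ^+ 2 * `|m| ^+ 2 <=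
  alg_beta ip sigma beta a g m gam * (a * ip g m - 2 * sigma * gam).
Proof.
have [->|mn0] := eqVneq m 0; first by rewrite /alg_beta eqxx expr0n /= !mul0r.
set b := alg_beta ip sigma beta a g m gam.
have m2 : 0 < `|m| ^+ 2 by rewrite exprn_gt0 ?normr_gt0.
have /andP[b0] := alg_beta_bounds mn0; rewrite -/b le_max => /orP[b_le0|bq].
  have -> : b = 0 by apply/le_anti; rewrite b_le0 b0.
  by rewrite expr0n /= !mul0r.
by rewrite ler_pdivlMr // in bq; rewrite expr2 -mulrA ler_wpM2l.
Qed.

End StepSizes.

Lemma linear_opp {R : realType} {X Y : normedModType R} {f : X -> Y} :
  linear f -> forall u, f (- u) = - f u.
Proof.
move=> hf u.
have f0 : f 0 = 0.
  by apply: (addrI (f 0)); have := hf 1 0 0; rewrite !scale1r !addr0.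
by have := hf (-1) u 0; rewrite !addr0 f0 addr0 !scaleN1r.
Qed.

Lemma adjoint_norm_le {R : realType} {X Y : normedModType R}
  {ipX : X -> X -> R} {ipY : Y -> Y -> R} (hX : inner_product ipX) (hY : inner_product ipY)
  {A : X -> Y} {As : Y -> X} {c : R} : 0 <= c ->
  (forall v h, ipX (As v) h = ipY v (A h)) -> (forall h, `|A h| <= c * `|h|) ->
  forall v, `|As v| <= c * `|v|.
Proof.
move=> c0 hadj hA v; have [->|Asn0] := eqVneq (As v) 0; first by rewrite normr0 mulr_ge0.
have G0 : 0 < `|As v| by rewrite normr_gt0.
rewrite -(ler_pM2r G0) -expr2 -(ipxx hX) hadj.
apply: le_trans (ip_le_norm hY _ _) _.
by rewrite mulrAC [`|v| * _]mulrC; apply: (ler_wpM2r (normr_ge0 v) (hA (As v))).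
Qed.

Section Algorithm.
Context {R : realType} {X Y : normedModType R} {ipX : X -> X -> R} {ipY : Y -> Y -> R}
  (hX : inner_product ipX) (hY : inner_product ipY)
  {Rf : X -> \bar R} (hprop : proper_fun Rf)
  {sigma : R} (hsigma : 0 < sigma) (hsc : strongly_convex Rf sigma)
  {gradRs : X -> X} (hgrad : is_grad_conj ipX Rf gradRs)
  {F : X -> Y} {y : Y} {B : set X} {L : X -> X -> Y} {eta Lc : R}
  (hLlin : forall x, B x -> linear (L x)) (heta : 0 <= eta < 1)
  (htcc : forall x xb, B x -> B xb -> `|F x - F xb - L xb (x - xb)| <= eta * `|F x - F xb|)
  (hLc : 0 < Lc) (hLbd : forall x, B x -> forall h, `|L x h| <= Lc * `|h|)
  {Lstar : X -> Y -> X}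
  (hLstar : forall x, B x -> forall v h, ipX (Lstar x v) h = ipY v (L x h))
  {tau : R} {beta : \bar R} {mu0 mu1 : R} {rule : step_rule}
  (htau : 1 < tau) (hbeta : (0 < beta)%E) (hmu0 : 0 < mu0) (hmu1 : 0 < mu1)
  {delta : R} {ydelta : Y} (hnoise : `|ydelta - y| <= delta).

Local Notation c0 := (1 - (1 + eta) / tau - eta - mu0 / (4 * sigma)).

Lemma adjoint_residual_ge x xh : B x -> B xh -> F xh = y ->
  (1 - eta) * `|F x - ydelta| ^+ 2 - (1 + eta) * delta * `|F x - ydelta|
  <= ipX (Lstar x (F x - ydelta)) (x - xh).
Proof.
move=> hx hxh hFxh; set r := F x - ydelta.
rewrite hLstar //.
set e := F xh - F x - L x (xh - x).
have he : `|e| <= eta * `|F xh - F x| := htcc xh x hxh hx.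
have e2 : L x (xh - x) = (y - F x) - e by rewrite /e hFxh opprB addrCA subrr addr0.
have e3 : y - F x = - (r + (ydelta - y)) by rewrite /r addrA subrK opprB.
rewrite -[x - xh]opprB (linear_opp (hLlin x hx)) e2 e3.
rewrite (ipNr hY) (ipBr hY) (ipNr hY) (ipDr hY) (ipxx hY).
have hFr : `|F xh - F x| <= `|r| + delta.
  by rewrite hFxh e3 normrN; apply: le_trans (ler_normD _ _) _; rewrite lerD2l.
have := ip_ge_Nnorm hY r (ydelta - y); have := ip_ge_Nnorm hY r e.
have := ler_wpM2l (normr_ge0 r) hnoise.
have := ler_wpM2l (normr_ge0 r) (le_trans he (ler_wpM2l (proj1 (andP heta)) hFr)).
nra.
Qed.

Section OneStep.
Context {s : @alg_state X R} {xh : X}.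
Hypotheses (hx : B (st_x s)) (hxh : B xh) (hFxh : F xh = y).

Local Notation s' :=
  (alg_step ipX gradRs F Lstar Lc eta sigma beta mu0 mu1 rule delta ydelta s).
Local Notation r := (F (st_x s) - ydelta).
Local Notation g := (Lstar (st_x s) r).
Local Notation a := (alg_alpha Lc mu0 mu1 rule r g).
Local Notation m := (st_xi s - st_xip s).
Local Notation b := (alg_beta ipX sigma beta a g m (st_gam s)).

Lemma alg_step_xi_sub : st_xi s' - st_xi s = b *: m - a *: g.
Proof. by rewrite /= [st_xi s - _]addrC -!addrA (addrCA (st_xi s)) subrr addr0 addrC. Qed.

Lemma alg_step_ip_sub z :
  ipX (st_xi s' - st_xi s) z = b * ipX m z - a * ipX g z.
Proof. by rewrite alg_step_xi_sub (ipBl hX) !(ipZl hX). Qed.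

Lemma alg_step_alpha_ip_ge :
  a * ((1 - eta) * `|r| ^+ 2 - (1 + eta) * delta * `|r|) <= a * ipX g (st_x s - xh).
Proof.
apply: ler_wpM2l; first by rewrite alg_alpha_ge0 ?ltW.
exact: adjoint_residual_ge.
Qed.

Hypothesis hinv : ipX m (st_x s - xh) <= st_gam s.

Lemma alg_step_inv : ipX (st_xi s' - st_xip s') (st_x s' - xh) <= st_gam s'.
Proof.
have hb := ler_wpM2l (alg_beta_ge0 ipX sigma beta a g m (st_gam s) hbeta) hinv.
have ha := alg_step_alpha_ip_ge.
have -> : st_xip s' = st_xi s by [].
have -> : st_x s' - xh = (st_x s' - st_x s) + (st_x s - xh) by rewrite addrA subrK.
by rewrite (ipDr hX) (alg_step_ip_sub (st_x s - xh)) /=; lra.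
Qed.

Lemma alg_step_dual_le :
  `|st_xi s' - st_xi s| ^+ 2 + 4 * sigma * (b * ipX m (st_x s - xh))
  <= a * mu0 * `|r| ^+ 2.
Proof.
have b0 := alg_beta_ge0 ipX sigma beta a g m (st_gam s) hbeta.
have a0 : 0 <= a by rewrite alg_alpha_ge0 ?ltW.
have hb := alg_beta_sqr_le ipX sigma beta a g m (st_gam s) hbeta.
have ha := ler_wpM2l a0 (alg_alpha_mul_sqr_le _ _ mu1 rule _ _ hLc (ltW hmu0)
  (adjoint_norm_le hX hY (ltW hLc) (hLstar _ hx) (hLbd _ hx) r)).
have hm := ler_wpM2l (mulr_ge0 (mulr_ge0 (ler0n _ 4) (ltW hsigma)) b0) hinv.
have hb0 := le_trans (mulr_ge0 (sqr_ge0 b) (sqr_ge0 `|m|)) hb.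
rewrite (ipC hX g m) in hb hb0.
rewrite alg_step_xi_sub (normB2 hX) (ipZl hX) (ipZr hX) !normrZ !ger0_norm // !exprMn.
lra.
Qed.

Lemma alg_step_decrease : subdiff ipX Rf (st_x s) (st_xi s) -> domR Rf xh ->
  tau * delta < `|r| ->
  bregmanR ipX Rf (st_xi s') xh (st_x s')
  <= bregmanR ipX Rf (st_xi s) xh (st_x s) - c0 * a * `|r| ^+ 2.
Proof.
move=> hsd hdh hr.
have hsd' : subdiff ipX Rf (st_x s') (st_xi s') :=
  subdiff_grad_conj hX Rf hprop _ hgrad.
have hdual := bregmanR_le_dual hX Rf hprop sigma (ltW hsigma) hsc hsd hsd'.
have hdual_step := alg_step_dual_le.
have hres := alg_step_alpha_ip_ge.
have hbD : bregmanR ipX Rf (st_xi s') (st_x s) (st_x s') + b * ipX m (st_x s - xh)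
    <= a * mu0 * `|r| ^+ 2 / (4 * sigma).
  by rewrite ler_pdivlMr ?mulr_gt0 //; lra.
have hdelta_le : a * ((1 + eta) * `|r|) * delta <= a * ((1 + eta) * `|r|) * (`|r| / tau).
  apply: ler_wpM2l.
    by rewrite !mulr_ge0 ?alg_alpha_ge0 ?normr_ge0 ?ltW //; case/andP: heta => eta0 _; lra.
  by rewrite ler_pdivlMr ?(lt_trans ltr01 htau) // mulrC ltW.
have := bregmanR_three_point hX Rf (st_xi s) (st_xi s') xh (st_x s) (st_x s').
rewrite alg_step_ip_sub; lra.
Qed.

End OneStep.

Section Iteration.
Context {x0 xi0 : X} {k : nat}.
Hypotheses (hxi0 : subdiff ipX Rf x0 xi0) (hc0 : 0 < c0)
  (hk : forall n, (n < k)%N -> tau * delta <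
     `|alg_r ipX gradRs F Lstar Lc eta sigma beta mu0 mu1 rule delta ydelta x0 xi0 n|).

Local Notation S :=
  (alg_iter ipX gradRs F Lstar Lc eta sigma beta mu0 mu1 rule delta ydelta x0 xi0).
Local Notation xn n := (st_x (S n)).
Local Notation xin n := (st_xi (S n)).
Local Notation an :=
  (alg_alpha_n ipX gradRs F Lstar Lc eta sigma beta mu0 mu1 rule delta ydelta x0 xi0).
Local Notation rn :=
  (alg_r ipX gradRs F Lstar Lc eta sigma beta mu0 mu1 rule delta ydelta x0 xi0).

Lemma alg_iter_subdiff n : subdiff ipX Rf (xn n) (xin n).
Proof. by case: n => [|n]; [exact: hxi0 | exact (subdiff_grad_conj hX Rf hprop _ hgrad)]. Qed.

Section Solution.
Context {xh : X}.
Hypotheses (hxh : B xh) (hFxh : F xh = y) (hdh : domR Rf xh).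

Lemma alg_iter_inv n : (forall j, (j < n)%N -> B (xn j)) ->
  ipX (xin n - st_xip (S n)) (xn n - xh) <= st_gam (S n).
Proof.
elim: n => [|n IH] hB; first by rewrite /= subrr (ip0l hX).
exact: alg_step_inv (hB n (ltnSn n)) hxh hFxh (IH (fun j hj => hB j (ltnW hj))).
Qed.

Lemma alg_iter_decrease n : (n < k)%N -> (forall j, (j <= n)%N -> B (xn j)) ->
  bregmanR ipX Rf (xin n.+1) xh (xn n.+1)
  <= bregmanR ipX Rf (xin n) xh (xn n) - c0 * an n * `|rn n| ^+ 2.
Proof.
move=> hnk hB.
have hinv := alg_iter_inv n (fun j hj => hB j (ltnW hj)).
exact: alg_step_decrease (hB n (leqnn n)) hxh hFxh hinv (alg_iter_subdiff n) hdh (hk n hnk).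
Qed.

Lemma alg_iter_bregman_le_init n : (n <= k)%N -> (forall j, (j < n)%N -> B (xn j)) ->
  bregmanR ipX Rf (xin n) xh (xn n) <= bregmanR ipX Rf xi0 xh x0.
Proof.
elim: n => [|n IH] hnk hB //.
apply: le_trans (IH (ltnW hnk) (fun j hj => hB j (ltnW hj))).
have := alg_iter_decrease n hnk (fun j hj => hB j hj).
have a0 : 0 <= an n := alg_alpha_ge0 _ _ _ _ _ _ (ltW hmu0) (ltW hmu1).
have : 0 <= c0 * an n * `|rn n| ^+ 2 by rewrite !mulr_ge0 ?sqr_ge0 // ltW.
lra.
Qed.

End Solution.

Context {rho : R} {xb : X}.
Hypotheses (hrho : 0 < rho) (hball : cball x0 (2 * rho) `<=` B)
  (hxb : domR Rf xb) (hFxb : F xb = y)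
  (hxb0 : bregmanR ipX Rf xi0 xb x0 <= sigma * rho ^+ 2).

Lemma alg_iter_in_ball n : (n <= k)%N -> cball x0 (2 * rho) (xn n).
Proof.
have dist_xb z zeta : subdiff ipX Rf z zeta ->
    bregmanR ipX Rf zeta xb z <= sigma * rho ^+ 2 -> `|xb - z| <= rho.
  move=> hsd.
  exact: (bregmanR_dist_le hX Rf hprop sigma (ltW hsigma) hsc hsigma (ltW hrho) hsd hxb).
have xb_x0 := dist_xb _ _ hxi0 hxb0.
have xb_B : B xb by apply: hball; apply: le_trans xb_x0 _; rewrite ler_pMl // ler1n.
elim/ltn_ind: n => n IH hnk.
have hB j : (j < n)%N -> B (xn j).
  by move=> hj; apply/hball/IH => //; exact: ltnW (leq_trans hj hnk).
have hdec := alg_iter_bregman_le_init xb_B hFxb hxb n hnk hB.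
have := dist_xb _ _ (alg_iter_subdiff n) (le_trans hdec hxb0).
rewrite /cball /= => xn_xb.
by apply: le_trans (ler_distD xb _ _) _; rewrite distrC; lra.
Qed.

End Iteration.
End Algorithm.

Theorem mainTheorem2
  (R : realType) (X Y : completeNormedModType R)
  (ipX : X -> X -> R) (ipY : Y -> Y -> R)
  (hX : inner_product ipX) (hY : inner_product ipY)
  (* the penalty functional and grad R^* *)
  (Rf : X -> \bar R) (sigma : R) (gradRs : X -> X)
  (hsigma : 0 < sigma) (hprop : proper_fun Rf)
  (hlsc : lower_semicontinuous Rf) (hsc : strongly_convex Rf sigma)
  (hgrad : is_grad_conj ipX Rf gradRs)
  (* the forward operator *)
  (domF : set X) (F : X -> Y) (y : Y)
  (* assumption (b) *)
  (rho : R) (x0 xi0 : X) (hrho : 0 < rho) (hxi0 : subdiff ipX Rf x0 xi0)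
  (hball : cball x0 (2 * rho) `<=` domF)
  (hsol : exists2 xb, domF xb /\ F xb = y &
            (bregman ipX Rf xi0 xb x0 <= (sigma * rho ^+ 2)%:E)%E)
  (* assumption (c): weak closedness *)
  (hwc : forall (xs : nat -> X) (x : X) (v : Y),
      (forall n, domF (xs n)) ->
      (forall z, ipX (xs n) z @[n --> \oo] --> ipX x z) ->
      F (xs n) @[n --> \oo] --> v ->
      domF x /\ F x = v)
  (* assumption (d) *)
  (L : X -> X -> Y) (eta Lc : R)
  (hLlin : forall x, cball x0 (2 * rho) x -> linear (L x))
  (hLcont : forall x, cball x0 (2 * rho) x -> forall e : R, 0 < e ->
      exists2 d : R, 0 < d & forall x', cball x0 (2 * rho) x' -> `|x' - x| < d ->
        forall h, `|L x' h - L x h| <= e * `|h|)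
  (heta : 0 <= eta < 1)
  (htcc : forall x xb, cball x0 (2 * rho) x -> cball x0 (2 * rho) xb ->
      `|F x - F xb - L xb (x - xb)| <= eta * `|F x - F xb|)
  (hLc : 0 < Lc)
  (hLbd : forall x, cball x0 (2 * rho) x -> forall h, `|L x h| <= Lc * `|h|)
  (* adjoints L(x)^* *)
  (Lstar : X -> Y -> X)
  (hLstar : forall x, cball x0 (2 * rho) x ->
      forall v h, ipX (Lstar x v) h = ipY v (L x h))
  (* parameters and data of Algorithm 1 *)
  (tau : R) (beta : \bar R) (mu0 mu1 : R) (rule : step_rule)
  (htau : 1 < tau) (hbeta : (0 < beta)%E) (hmu0 : 0 < mu0) (hmu1 : 0 < mu1)
  (delta : R) (ydelta : Y) (hdelta : 0 < delta) (hnoise : `|ydelta - y| <= delta)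
  (hc0 : 0 < 1 - (1 + eta) / tau - eta - mu0 / (4 * sigma))
  (k : nat)
  (hk : forall n, (n < k)%N ->
      tau * delta < `|alg_r ipX gradRs F Lstar Lc eta sigma beta mu0 mu1 rule delta ydelta x0 xi0 n|) :
  let xn := alg_x ipX gradRs F Lstar Lc eta sigma beta mu0 mu1 rule delta ydelta x0 xi0 in
  let xin := alg_xi ipX gradRs F Lstar Lc eta sigma beta mu0 mu1 rule delta ydelta x0 xi0 in
  let rn := alg_r ipX gradRs F Lstar Lc eta sigma beta mu0 mu1 rule delta ydelta x0 xi0 in
  let an := alg_alpha_n ipX gradRs F Lstar Lc eta sigma beta mu0 mu1 rule delta ydelta x0 xi0 in
  let c0 := 1 - (1 + eta) / tau - eta - mu0 / (4 * sigma) in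
  (forall n, (n <= k)%N -> cball x0 (2 * rho) (xn n)) /\
  (forall xh, F xh = y -> cball x0 (2 * rho) xh -> domR Rf xh ->
     forall n, (n < k)%N ->
       (bregman ipX Rf (xin n.+1) xh (xn n.+1)
        <= bregman ipX Rf (xin n) xh (xn n) - (c0 * an n * `|rn n| ^+ 2)%:E)%E).
Proof.
move=> xn xin rn an c0.
case: hsol => xb [_ hFxb] hxb.
have hx0 := subdiff_domR Rf hxi0.
have hxbd := bregman_le_domR Rf hprop hx0 hxb.
rewrite bregmanE // lee_fin in hxb.
have ball := alg_iter_in_ball hX hY hprop hsigma hsc hgrad hLlin heta htcc hLc hLbd hLstar
  htau hbeta hmu0 hmu1 hnoise hxi0 hc0 hk hrho (@subset_refl _ _) hxbd hFxb hxb.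
split => [|xh hFxh hxh hdh n hnk]; first exact: ball.
have hdom j := subdiff_domR Rf (alg_iter_subdiff hX hprop hgrad hxi0 j).
rewrite !bregmanE //; try exact: hdom.
rewrite -EFinB lee_fin.
apply: (alg_iter_decrease hX hY hprop hsigma hsc hgrad hLlin heta htcc hLc hLbd hLstar
  htau hbeta hmu0 hmu1 hnoise hxi0 hk hxh hFxh hdh n hnk).
by move=> j hj; apply: ball (leq_trans hj (ltnW hnk)).
Qed.
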